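(* Let $\mathcal D$ be a strongly first-order class of dependency notions and let $\phi\in\mathbf{FO}(\mathcal D,[\cdot])$ be a sentence. Then there is a first-order sentence $\phi'$ such that for every structure $\mathfrak M$, $\mathfrak M\models_{\{\emptyset\}}\phi$ if and only if $\mathfrak M\models\phi'$.
   Context: Team semantics (lax version). For a structure $\mathfrak M$ with domain $M$, a team $X$ is a (possibly empty) set of assignments $s:V\to M$, $V$ a finite set of variables; $X(\vec v)=\{s(\vec v):s\in X\}$. Satisfaction for formulas in negation normal form: first-order literal $\alpha$: every $s\in X$ satisfies $\alpha$ (Tarski); $\psi\vee\theta$: $X=Y\cup Z$ with $\mathfrak M\models_Y\psi$, $\mathfrak M\models_Z\theta$; $\psi\wedge\theta$: both; $\exists v\psi$: some $F:X\to\mathcal P(M)\setminus\{\emptyset\}$ with $\mathfrak M\models_{X[F/v]}\psi$, $X[F/v]=\{s[m/v]:s\in X,m\in F(s)\}$; $\forall v\psi$: $\mathfrak M\models_{X[M/v]}\psi$, $X[M/v]=\{s[m/v]:s\in X,m\in M\}$. A $k$-ary dependency notion $\mathbf D$ is an isomorphism-closed class of structures $(M,R)$, $R$ $k$-ary; $\mathfrak M\models_X\mathbf D\vec v$ iff $(M,X(\vec v))\in\mathbf D$. A class $\mathcal D$ of dependency notions is strongly first-order if for every sentence $\phi$ of $\mathbf{FO}(\mathcal D)$ there is a first-order sentence $\phi'$ with $\mathfrak M\models_{\{\emptyset\}}\phi\iff\mathfrak M\models\phi'$ for all $\mathfrak M$. For a first-order sentence $\theta$ in the signature of $\mathfrak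 M$, $\mathfrak M\models_X[\theta]$ iff $\mathfrak M\models\theta$ in Tarski semantics. *)

From mathcomp Require Import ssreflect ssrfun ssrbool eqtype ssrnat fintype.
From Stdlib Require Import PeanoNat.


Record signature := Signature { rsym : Type; rar : rsym -> nat }.

Record structure (L : signature) := Structure {
  carrier :> Type;
  carrier_inh : inhabited carrier;            (* first-order domains are nonempty *)
  interp : forall r : rsym L, ('I_(rar L r) -> carrier) -> Prop }.
Arguments carrier {L} _.
Arguments interp {L} _ _ _.

(* Variables are natural numbers; an assignment is a partial map with
   (finite) domain = the set of variables on which it is defined. *)
Definition var := nat.
Definition assignment (M : Type) := var -> option M.
Definition empty_assignment (M : Type) : assignment M := fun _ => None.
Definition upd (M : Type) (s : assignment M) (v : var) (m : M) : assignment M :=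
  fun y => if Nat.eqb y v then Some m else s y.

Inductive fo (L : signature) : Type :=
| FRel (r : rsym L) (vs : 'I_(rar L r) -> var)
| FEq (x y : var)
| FNot (f : fo L)
| FAnd (f g : fo L)
| FOr (f g : fo L)
| FEx (x : var) (f : fo L)
| FAll (x : var) (f : fo L).

Fixpoint fo_free (L : signature) (f : fo L) (z : var) : Prop :=
  match f with
  | FRel r vs => exists j, vs j = z
  | FEq x y => x = z \/ y = z
  | FNot g => fo_free L g z
  | FAnd g h | FOr g h => fo_free L g z \/ fo_free L h z
  | FEx x g | FAll x g => x <> z /\ fo_free L g z
  end.

Definition fo_sentence (L : signature) (f : fo L) : Prop := forall z, ~ fo_free L f z.

Fixpoint fo_sat (L : signature) (M : structure L) (s : assignment M) (f : fo L) : Prop :=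
  match f with
  | FRel r vs => exists t, (forall j, s (vs j) = Some (t j)) /\ interp M r t
  | FEq x y => exists a, s x = Some a /\ s y = Some a
  | FNot g => ~ fo_sat L M s g
  | FAnd g h => fo_sat L M s g /\ fo_sat L M s h
  | FOr g h => fo_sat L M s g \/ fo_sat L M s h
  | FEx x g => exists m : M, fo_sat L M (upd M s x m) g
  | FAll x g => forall m : M, fo_sat L M (upd M s x m) g
  end.

Definition fo_true (L : signature) (M : structure L) (f : fo L) : Prop :=
  fo_sat L M (empty_assignment M) f.

(* A k-ary dependency notion: an isomorphism-closed class of structures (M,R),
   R a k-ary relation on M (k-tuples are maps 'I_k -> M). *)
Definition iso_closed (k : nat) (C : forall M : Type, (('I_k -> M) -> Prop) -> Prop) :=
  forall (M N : Type) (f : M -> N) (g : N -> M),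
    cancel f g -> cancel g f ->
    forall R : ('I_k -> M) -> Prop,
      C M R -> C N (fun t => R (fun j => g (t j))).

Record depnotion := DepNotion {
  dk : nat;
  dclass : forall M : Type, (('I_dk -> M) -> Prop) -> Prop;
  dclass_iso : iso_closed dk dclass }.

(* ---------- Team-semantics formulas FO(D,[.]) in negation normal form ---------- *)
Inductive literal (L : signature) : Type :=
| LRel (r : rsym L) (vs : 'I_(rar L r) -> var)
| LNRel (r : rsym L) (vs : 'I_(rar L r) -> var)
| LEq (x y : var)
| LNeq (x y : var).

(* A class of dependency notions is given as an indexed family D : I -> depnotion;
   formulas are parametrised by the arities of the notions. *)
Inductive tform (L : signature) (I : Type) (dar : I -> nat) : Type :=
| TLit (l : literal L)
| TDep (i : I) (vs : 'I_(dar i) -> var)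
| TBr (th : fo L)
| TOr (f g : tform L I dar)
| TAnd (f g : tform L I dar)
| TEx (x : var) (f : tform L I dar)
| TAll (x : var) (f : tform L I dar).

Definition lit_free (L : signature) (l : literal L) (z : var) : Prop :=
  match l with
  | LRel r vs | LNRel r vs => exists j, vs j = z
  | LEq x y | LNeq x y => x = z \/ y = z
  end.

Fixpoint t_free (L : signature) (I : Type) (dar : I -> nat) (f : tform L I dar) (z : var) : Prop :=
  match f with
  | TLit l => lit_free L l z
  | TDep i vs => exists j, vs j = z
  | TBr th => fo_free L th z       (* forces theta to be a sentence in a sentence *)
  | TOr g h | TAnd g h => t_free L I dar g z \/ t_free L I dar h z
  | TEx x g | TAll x g => x <> z /\ t_free L I dar g z
  end.

Definition t_sentence (L : signature) (I : Type) (dar : I -> nat) (f : tform L I dar) : Prop :=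
  forall z, ~ t_free L I dar f z.

(* membership in FO(D): no occurrence of [theta] *)
Fixpoint no_bracket (L : signature) (I : Type) (dar : I -> nat) (f : tform L I dar) : Prop :=
  match f with
  | TLit _ | TDep _ _ => True
  | TBr _ => False
  | TOr g h | TAnd g h => no_bracket L I dar g /\ no_bracket L I dar h
  | TEx _ g | TAll _ g => no_bracket L I dar g
  end.

Definition team (M : Type) := assignment M -> Prop.
Definition team_empty_asg (M : Type) : team M := fun s => s = empty_assignment M.

Definition lit_sat (L : signature) (M : structure L) (s : assignment M) (l : literal L) : Prop :=
  match l with
  | LRel r vs => exists t, (forall j, s (vs j) = Some (t j)) /\ interp M r t
  | LNRel r vs => exists t, (forall j, s (vs j) = Some (t j)) /\ ~ interp M r t
  | LEq x y => exists a, s x = Some a /\ s y = Some a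
  | LNeq x y => exists a b, s x = Some a /\ s y = Some b /\ a <> b
  end.

Definition team_rel (M : Type) (X : team M) (k : nat) (vs : 'I_k -> var) : ('I_k -> M) -> Prop :=
  fun t => exists s, X s /\ forall j, s (vs j) = Some (t j).

Definition team_sup (M : Type) (X : team M) (x : var) (F : assignment M -> M -> Prop) : team M :=
  fun s' => exists s m, X s /\ F s m /\ s' = upd M s x m.

Definition team_dup (M : Type) (X : team M) (x : var) : team M :=
  fun s' => exists s (m : M), X s /\ s' = upd M s x m.

(* lax team semantics *)
Fixpoint team_sat (L : signature) (I : Type) (D : I -> depnotion) (M : structure L)
  (f : tform L I (fun i => dk (D i))) (X : team M) {struct f} : Prop :=
  match f with
  | TLit l => forall s, X s -> lit_sat L M s l
  | TDep i vs => dclass (D i) M (team_rel M X _ vs)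
  | TBr th => fo_true L M th
  | TOr g h => exists Y Z : team M,
      (forall s, X s <-> Y s \/ Z s) /\ team_sat L I D M g Y /\ team_sat L I D M h Z
  | TAnd g h => team_sat L I D M g X /\ team_sat L I D M h X
  | TEx x g => exists F : assignment M -> M -> Prop,
      (forall s, X s -> exists m, F s m) /\ team_sat L I D M g (team_sup M X x F)
  | TAll x g => team_sat L I D M g (team_dup M X x)
  end.

Definition strongly_first_order (I : Type) (D : I -> depnotion) : Prop :=
  forall (L : signature) (phi : tform L I (fun i => dk (D i))),
    t_sentence L I _ phi -> no_bracket L I _ phi ->
    exists phi' : fo L, fo_sentence L phi' /\
      forall M : structure L, team_sat L I D M phi (team_empty_asg M) <-> fo_true L M phi'.

From mathcomp Require Import ssreflect ssrfun ssrbool eqtype ssrnat fintype.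
From Stdlib Require Import PeanoNat.

(* A bracket [theta] is satisfied by every team as soon as M |= theta, and by
   none otherwise.  Hence phi is equivalent to the conjunction of its brackets
   taken as first-order sentences, together with the bracket-free formula
   obtained by replacing every bracket by a tautology; strong first-orderness
   of D turns the latter into a first-order sentence. *)

Section FirstOrderClosure.
Variable L : signature.

Definition fo_top : fo L := FAll L 0 (FEq L 0 0).
Definition fo_bot : fo L := FNot L fo_top.

Lemma fo_sat_top (M : structure L) (s : assignment M) : fo_sat L M s fo_top.
Proof. by move=> m /=; exists m; rewrite /upd. Qed.

Lemma fo_top_closed z : ~ fo_free L fo_top z.
Proof. by move=> /= [? [|]]. Qed.

(* A bracket [theta] inside a sentence may mention variables bound outside it,
   yet it is evaluated at the empty assignment, where every atom on an
   unassigned variable is false.  [fo_close B] makes this explicit: atoms on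
   variables outside B (and not bound within) become [fo_bot]. *)
Fixpoint fo_close (B : var -> bool) (f : fo L) : fo L :=
  match f with
  | FRel r vs => if [forall j, B (vs j)] then FRel L r vs else fo_bot
  | FEq x y => if B x && B y then FEq L x y else fo_bot
  | FNot g => FNot L (fo_close B g)
  | FAnd g h => FAnd L (fo_close B g) (fo_close B h)
  | FOr g h => FOr L (fo_close B g) (fo_close B h)
  | FEx x g => FEx L x (fo_close (fun y => Nat.eqb y x || B y) g)
  | FAll x g => FAll L x (fo_close (fun y => Nat.eqb y x || B y) g)
  end.

Lemma fo_close_free f : forall B z, fo_free L (fo_close B f) z -> B z.
Proof.
elim: f => [r vs|x y|g IH|g IHg h IHh|g IHg h IHh|x g IH|x g IH] B z /=.
- by case: ifP => [/forallP H [j <-]|_ /fo_top_closed].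
- by case: ifP => [/andP [? ?] [<-|<-]|_ /fo_top_closed].
- exact: IH.
- by case=> [/IHg|/IHh].
- by case=> [/IHg|/IHh].
- by case=> xz /IH /orP [/Nat.eqb_eq zx|//]; case: xz.
- by case=> xz /IH /orP [/Nat.eqb_eq zx|//]; case: xz.
Qed.

Lemma fo_sat_close (M : structure L) f : forall B (s : assignment M),
  (forall y, B y = false -> s y = None) ->
  fo_sat L M s (fo_close B f) <-> fo_sat L M s f.
Proof.
elim: f => [r vs|x y|g IH|g IHg h IHh|g IHg h IHh|x g IH|x g IH] B s sB /=.
- case: ifP => [//|/negbT /forallPn [j /negbTE Bj]].
  split=> [H|[t [Ht _]]]; first by case: H; apply: fo_sat_top.
  by move: (Ht j); rewrite sB.
- case: ifP => [//|/negbT]; rewrite negb_and => Bxy.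
  split=> [H|[a [sx sy]]]; first by case: H; apply: fo_sat_top.
  by case/orP: Bxy => /negbTE /sB; rewrite ?sx ?sy.
- by rewrite IH.
- by rewrite IHg // IHh.
- by rewrite IHg // IHh.
- have upd_close m : fo_sat L M (upd M s x m) (fo_close (fun y => Nat.eqb y x || B y) g)
      <-> fo_sat L M (upd M s x m) g.
    apply: IH => y /norP [/negbTE yx /negbTE By]; rewrite /upd yx; exact: sB.
  by split=> -[m /upd_close]; exists m.
- have upd_close m : fo_sat L M (upd M s x m) (fo_close (fun y => Nat.eqb y x || B y) g)
      <-> fo_sat L M (upd M s x m) g.
    apply: IH => y /norP [/negbTE yx /negbTE By]; rewrite /upd yx; exact: sB.
  by split=> H m; apply/upd_close.
Qed.

Lemma fo_true_close (M : structure L) f :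
  fo_true L M (fo_close (fun _ => false) f) <-> fo_true L M f.
Proof. exact: fo_sat_close. Qed.

End FirstOrderClosure.

Section Brackets.
Variables (L : signature) (I : Type) (D : I -> depnotion).
Notation dar := (fun i => dk (D i)).
Notation tform := (tform L I dar).
Notation team_sat := (team_sat L I D).

Definition t_top : tform := TAll L I dar 0 (TLit L I dar (LEq L 0 0)).

Lemma team_sat_top (M : structure L) (X : team M) : team_sat M t_top X.
Proof. by move=> s /= [s' [m [_ ->]]]; exists m; rewrite /upd. Qed.

Fixpoint drop_brackets (f : tform) : tform :=
  match f with
  | TBr _ => t_top
  | TOr g h => TOr L I dar (drop_brackets g) (drop_brackets h)
  | TAnd g h => TAnd L I dar (drop_brackets g) (drop_brackets h)
  | TEx x g => TEx L I dar x (drop_brackets g)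
  | TAll x g => TAll L I dar x (drop_brackets g)
  | g => g
  end.

Fixpoint bracket_conj (f : tform) : fo L :=
  match f with
  | TBr th => fo_close L (fun _ => false) th
  | TOr g h | TAnd g h => FAnd L (bracket_conj g) (bracket_conj h)
  | TEx _ g | TAll _ g => bracket_conj g
  | _ => fo_top L
  end.

Lemma bracket_conj_sentence f : fo_sentence L (bracket_conj f).
Proof.
move=> z; elim: f => [l|i vs|th|g IHg h IHh|g IHg h IHh|x g IH|x g IH] //=.
- exact: fo_top_closed.
- exact: fo_top_closed.
- by move/fo_close_free.
- by case.
- by case.
Qed.

Lemma t_sentence_drop_brackets f :
  t_sentence L I dar f -> t_sentence L I dar (drop_brackets f).
Proof.
move=> fs z dz; apply: (fs z); move: dz {fs}.
elim: f => [l|i vs|th|g IHg h IHh|g IHg h IHh|x g IH|x g IH] //=.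
- by case=> nz [z0|z0]; case: nz.
- by case=> [/IHg|/IHh]; [left|right].
- by case=> [/IHg|/IHh]; [left|right].
- by case=> ? /IH.
- by case=> ? /IH.
Qed.

Lemma no_bracket_drop_brackets f : no_bracket L I dar (drop_brackets f).
Proof. by elim: f => //= *; split. Qed.

Lemma team_sat_bracket_conj (M : structure L) f (X : team M) :
  team_sat M f X -> fo_true L M (bracket_conj f).
Proof.
elim: f X => [l|i vs|th|g IHg h IHh|g IHg h IHh|x g IH|x g IH] X /=.
- by move=> _; apply: fo_sat_top.
- by move=> _; apply: fo_sat_top.
- by move/fo_true_close.
- by case=> [Y [Z [_ [/IHg ? /IHh ?]]]].
- by case=> /IHg ? /IHh ?.
- by case=> [F [_ /IH]].
- exact: IH.
Qed.

Lemma team_sat_drop_brackets (M : structure L) f :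
  fo_true L M (bracket_conj f) -> forall X : team M,
  team_sat M f X <-> team_sat M (drop_brackets f) X.
Proof.
elim: f => [l|i vs|th|g IHg h IHh|g IHg h IHh|x g IH|x g IH] //= Hf X.
- by split=> _; [apply: team_sat_top | apply/fo_true_close].
- case: Hf => /IHg Eg /IHh Eh.
  split=> -[Y [Z [XYZ [gY hZ]]]]; exists Y, Z.
  + by rewrite -Eg -Eh.
  + by rewrite Eg Eh.
- by case: Hf => /IHg -> /IHh ->.
- by split=> -[F [FX gF]]; exists F; split=> //; apply/(IH Hf).
- exact: IH.
Qed.

Lemma team_sat_bracket_split (M : structure L) f (X : team M) :
  team_sat M f X <->
  fo_true L M (bracket_conj f) /\ team_sat M (drop_brackets f) X.
Proof.
split=> [fX|[Hf dX]].
- have Hf := team_sat_bracket_conj M f X fX.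
  by split=> //; apply/(team_sat_drop_brackets M f Hf).
- exact/(team_sat_drop_brackets M f Hf).
Qed.

End Brackets.

Theorem mainTheorem14 (I : Type) (D : I -> depnotion)
  (hD : strongly_first_order I D)
  (L : signature) (phi : tform L I (fun i => dk (D i)))
  (hphi : t_sentence L I (fun i => dk (D i)) phi) :
  exists phi' : fo L, fo_sentence L phi' /\
    forall M : structure L,
      team_sat L I D M phi (team_empty_asg M) <-> fo_true L M phi'.
Proof.
have [psi [psi_sentence psi_equiv]] := hD L (drop_brackets L I D phi)
  (t_sentence_drop_brackets L I D phi hphi) (no_bracket_drop_brackets L I D phi).
exists (FAnd L (bracket_conj L I D phi) psi); split.
  by move=> z /= [/bracket_conj_sentence|/psi_sentence].
by move=> M; rewrite team_sat_bracket_split psi_equiv.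
Qed.
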